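(* Let $A\in\mathbb{R}^{n\times n}$, $B\in\mathbb{R}^{n\times m}$, $C\in\mathbb{R}^{p\times n}$, $D\in\mathbb{R}^{p\times m}$ and $K\in\mathbb{N}$, and let $$\mathcal{O}_K=\begin{bmatrix} C^\top & (CA)^\top & \cdots & (CA^{K-1})^\top\end{bmatrix}^\top\in\mathbb{R}^{pK\times n}.$$ Assume $\mathcal{O}_K$ has full column rank, and set $\mathcal{W}_o:=\mathcal{O}_K^\top\mathcal{O}_K$. Let $\Sigma_v\in\mathbb{R}^{n\times n}$ with $\Sigma_v\succ 0$. Consider the matrix equation $$(\mathcal{O}_K^\top X\mathcal{O}_K)^{-1}=\Sigma_v \qquad (\ast)$$ in the unknown $X\in\mathbb{R}^{pK\times pK}$, and the set $S_X:=\{X\in\mathbb{R}^{pK\times pK}\mid (\ast)\text{ holds}\}$. Then: (i) $S_X$ is nonempty and $$S_X=\{N^\top N+R-MRM \mid R\in\mathbb{R}^{pK\times pK}\},$$ where $M:=\mathcal{O}_K\mathcal{W}_o^{-1}\mathcal{O}_K^\top$ and $N:=\Sigma_v^{-1/2}\mathcal{W}_o^{-1}\mathcal{O}_K^\top$. (ii) The set $S_X^+:=\{X\in S_X\mid X\succ 0\}$ is nonempty. (iii) If $pK=n$, then $S_X^+$ is a singleton, namely $S_X^+=\{N^\top N\}$.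
   Context: $\Sigma_v^{-1/2}$ denotes the symmetric positive definite square root of $\Sigma_v^{-1}$. For a square matrix, $X\succ 0$ means $X$ is symmetric positive definite. Equation $(\ast)$ includes the requirement that $\mathcal{O}_K^\top X\mathcal{O}_K$ be invertible. *)

From HB Require Import structures.
From mathcomp Require Import all_boot all_order all_algebra.
From mathcomp Require Import reals.
Set Implicit Arguments. Unset Strict Implicit. Unset Printing Implicit Defensive.
Import Order.TTheory GRing.Theory Num.Theory.
Local Open Scope ring_scope.

Definition posdef (R : realType) (k : nat) (X : 'M[R]_k) : Prop :=
  X^T = X /\ forall v : 'cV[R]_k, v != 0 -> 0 < (v^T *m X *m v) 0 0.

(* Extended observability matrix O_K = [C; CA; ...; CA^(K-1)] in R^{(K*p) x n};
   row index K-block k, within-block row r corresponds to row k*p + r. *)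
Definition obsv (R : realType) (n p K : nat) (A : 'M[R]_n) (C : 'M[R]_(p, n))
  : 'M[R]_(K * p, n) :=
  \matrix_(i < K * p, j < n)
    let kr := enum_val (cast_ord (esym (@mxvec_cast K p)) i) in
    (C *m A ^+ (nat_of_ord kr.1)) kr.2 j.

Definition eq_star (R : realType) (n N : nat) (O : 'M[R]_(N, n))
  (Sv : 'M[R]_n) (X : 'M[R]_N) : Prop :=
  (O^T *m X *m O) \in unitmx /\ invmx (O^T *m X *m O) = Sv.

From HB Require Import structures.
From mathcomp Require Import all_boot all_order all_algebra.
From mathcomp Require Import reals.

(* Since O has full column rank, W = O^T O is invertible and M = O W^-1 O^T is
   the orthogonal projection onto the column space of O.  As M X M equals
   (W^-1 O^T)^T (O^T X O) (W^-1 O^T) and O^T (R - M R M) O = 0, the solutions of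
   O^T X O = Sv^-1 form the affine space Y + {R - M R M}, for any particular
   solution Y with M Y M = Y; N = S W^-1 O^T, with S^2 = Sv^-1, gives one, Y = N^T N.
   Taking R = 1 yields N^T N + (1 - M), which is positive definite because
   |N v|^2 and |(1 - M) v|^2 vanish together only at v = 0.  When O is square,
   M = 1 and the solution is unique. *)

Set Implicit Arguments.
Unset Strict Implicit.
Unset Printing Implicit Defensive.
Import Order.TTheory GRing.Theory Num.Theory.
Local Open Scope ring_scope.

Section Gram.
Context {R : realType}.

Lemma mulmx_tr_self_sum k (w : 'cV[R]_k) : (w^T *m w) 0 0 = \sum_i w i 0 ^+ 2.
Proof. by rewrite mxE; apply: eq_bigr => i _; rewrite mxE expr2. Qed.

Lemma mulmx_tr_self_ge0 k (w : 'cV[R]_k) : 0 <= (w^T *m w) 0 0.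
Proof. by rewrite mulmx_tr_self_sum; apply: sumr_ge0 => i _; apply: sqr_ge0. Qed.

Lemma mulmx_tr_self_eq0 k (w : 'cV[R]_k) : ((w^T *m w) 0 0 == 0) = (w == 0).
Proof.
apply/idP/eqP => [|->]; last by rewrite mulmx0 mxE.
rewrite mulmx_tr_self_sum psumr_eq0 => [/allP w0|i _]; last exact: sqr_ge0.
apply/matrixP => i j; rewrite (ord1 j) mxE.
by apply/eqP; rewrite -sqrf_eq0; apply: w0; rewrite mem_index_enum.
Qed.

Lemma posdef_unitmx k (S : 'M[R]_k) : posdef S -> S \in unitmx.
Proof.
case=> _ S_pos; rewrite -row_free_unit; apply: inj_row_free => v vS0.
apply/eqP; apply: contraT => v_neq0.
have := S_pos v^T; rewrite trmx_eq0 trmxK vS0 mul0mx mxE ltxx.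
by move/(_ v_neq0).
Qed.

Lemma gram_unitmx k n (O : 'M[R]_(k, n)) : \rank O = n -> O^T *m O \in unitmx.
Proof.
move=> rankO; rewrite -row_free_unit; apply: inj_row_free => v vW0.
have freeOT : row_free O^T by rewrite /row_free mxrank_tr rankO.
apply/eqP; rewrite -(mulmx_free_eq0 _ freeOT) -trmx_eq0 -mulmx_tr_self_eq0.
by rewrite trmxK trmx_mul trmxK !mulmxA -(mulmxA v) vW0 mul0mx mxE.
Qed.

Lemma posdef_gram_add_compl k l (L : 'M[R]_(l, k)) (Q : 'M[R]_k) :
  Q^T = Q -> Q *m Q = Q -> (forall v : 'cV_k, L *m v = 0 -> Q *m v = 0) ->
  posdef (L^T *m L + (1%:M - Q)).
Proof.
move=> QT QQ kerL; set Q' := 1%:M - Q.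
have Q'T : Q'^T = Q' by rewrite linearB /= trmx1 QT.
have Q'Q' : Q' *m Q' = Q' by rewrite mulmxBl mul1mx mulmxBr mulmx1 QQ subrr subr0.
split; first by rewrite linearD /= Q'T trmx_mul trmxK.
move=> v v_neq0; rewrite mulmxDr mulmxDl mxE.
have -> : v^T *m (L^T *m L) *m v = (L *m v)^T *m (L *m v).
  by rewrite trmx_mul !mulmxA.
have -> : v^T *m Q' *m v = (Q' *m v)^T *m (Q' *m v).
  by rewrite trmx_mul Q'T !mulmxA -(mulmxA _ Q' Q') Q'Q'.
rewrite lt_def addr_ge0 ?mulmx_tr_self_ge0 // andbT.
apply: contra v_neq0; rewrite paddr_eq0 ?mulmx_tr_self_ge0 //.
rewrite !mulmx_tr_self_eq0 => /andP[/eqP Lv0 /eqP Q'v0].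
have <- : Q *m v = v.
  by apply/eqP; rewrite eq_sym -subr_eq0 -{1}(mul1mx v) -mulmxBl Q'v0.
by rewrite kerL.
Qed.

End Gram.

Definition lpinvmx {R : realType} {k n} (O : 'M[R]_(k, n)) : 'M[R]_(n, k) :=
  invmx (O^T *m O) *m O^T.

Definition colproj {R : realType} {k n} (O : 'M[R]_(k, n)) : 'M[R]_k :=
  O *m lpinvmx O.

Section ColumnProjection.
Context {R : realType} {k n : nat} (O : 'M[R]_(k, n)).
Hypothesis rankO : \rank O = n.

Local Notation P := (colproj O).

Lemma lpinvmxK : lpinvmx O *m O = 1%:M.
Proof. by rewrite -mulmxA mulVmx // gram_unitmx. Qed.

Lemma trmx_lpinvmx : (lpinvmx O)^T = O *m invmx (O^T *m O).
Proof. by rewrite trmx_mul trmxK trmx_inv trmx_mul trmxK. Qed.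

Lemma colproj_mulmx : P *m O = O.
Proof. by rewrite -mulmxA lpinvmxK mulmx1. Qed.

Lemma trmx_colproj : P^T = P.
Proof. by rewrite /colproj trmx_mul trmx_lpinvmx /lpinvmx mulmxA. Qed.

Lemma mulmx_colproj_tr : O^T *m P = O^T.
Proof. by rewrite -[LHS]trmxK trmx_mul trmxK trmx_colproj colproj_mulmx. Qed.

Lemma colproj_idem : P *m P = P.
Proof. by rewrite /colproj mulmxA -(mulmxA O) lpinvmxK mulmx1. Qed.

Lemma colproj_sandwich (X : 'M[R]_k) :
  P *m X *m P = (lpinvmx O)^T *m (O^T *m X *m O) *m lpinvmx O.
Proof. by rewrite -{1}trmx_colproj trmx_mul !mulmxA. Qed.

Lemma sandwich_colproj_compl (Y : 'M[R]_k) : O^T *m (Y - P *m Y *m P) *m O = 0.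
Proof.
move: mulmx_colproj_tr colproj_mulmx; move: P => Q OQ QO.
by rewrite mulmxBr mulmxBl !mulmxA OQ -(mulmxA _ Q O) QO subrr.
Qed.

Lemma sandwich_eqP (X Y : 'M[R]_k) : P *m Y *m P = Y ->
  O^T *m X *m O = O^T *m Y *m O <-> exists Rm, X = Y + Rm - P *m Rm *m P.
Proof.
move=> PYP; split => [XY | [Rm ->]].
  exists X; rewrite -[in RHS]PYP !colproj_sandwich XY.
  by rewrite addrAC subrr add0r.
by rewrite -addrA mulmxDr mulmxDl sandwich_colproj_compl addr0.
Qed.

Lemma colproj_full : k = n -> P = 1%:M.
Proof.
move=> kn; have freeO : row_free O by rewrite /row_free rankO kn.
by apply: (row_free_inj freeO); rewrite /= colproj_mulmx mul1mx.
Qed.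

End ColumnProjection.

Section WeightedSolution.
Context {R : realType} {k n : nat} (O : 'M[R]_(k, n)) (S : 'M[R]_n).
Hypotheses (rankO : \rank O = n) (ST : S^T = S) (S_unit : S \in unitmx).

Local Notation P := (colproj O).
Local Notation N := (S *m lpinvmx O).

Lemma weighted_mulmx : N *m O = S.
Proof. by rewrite -mulmxA lpinvmxK // mulmx1. Qed.

Lemma sandwich_weighted_gram : O^T *m (N^T *m N) *m O = S *m S.
Proof.
move: weighted_mulmx; move: N => L LO.
by rewrite mulmxA -trmx_mul -mulmxA LO ST.
Qed.

Lemma colproj_sandwich_weighted_gram : P *m (N^T *m N) *m P = N^T *m N.
Proof.
have NP : N *m P = N.
  by rewrite /colproj mulmxA -(mulmxA _ (lpinvmx O) O) lpinvmxK // mulmx1.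
move: NP (trmx_colproj O); move: N P => L Q LQ QT.
by rewrite -{1}QT mulmxA -trmx_mul -mulmxA LQ.
Qed.

Lemma weighted_gram_solutionsP (X : 'M[R]_k) :
  O^T *m X *m O = S *m S <-> exists Rm, X = N^T *m N + Rm - P *m Rm *m P.
Proof.
rewrite -sandwich_weighted_gram.
exact/sandwich_eqP/colproj_sandwich_weighted_gram.
Qed.

Lemma posdef_weighted_gram_add_compl : posdef (N^T *m N + (1%:M - P)).
Proof.
apply: posdef_gram_add_compl; [exact: trmx_colproj | exact: colproj_idem |].
move=> v Nv0; have -> : P = O *m invmx S *m N by rewrite -!mulmxA mulKmx.
by rewrite -mulmxA Nv0 mulmx0.
Qed.

End WeightedSolution.

Lemma eq_starE (R : realType) k n (O : 'M[R]_(k, n)) (Sv : 'M[R]_n) X :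
  Sv \in unitmx -> eq_star O Sv X <-> O^T *m X *m O = invmx Sv.
Proof.
move=> Sv_unit; split=> [[_ <-] | OXO]; first by rewrite invmxK.
by rewrite /eq_star OXO unitmx_inv invmxK.
Qed.

Theorem theorem5 (R : realType) (n m p K : nat)
  (A : 'M[R]_n) (B : 'M[R]_(n, m)) (C : 'M[R]_(p, n)) (D : 'M[R]_(p, m))
  (Sv : 'M[R]_n) (Svih : 'M[R]_n) :
  \rank (obsv K A C) = n ->
  posdef Sv ->
  (* Svih is the symmetric positive definite square root of Sv^{-1} *)
  posdef Svih -> Svih *m Svih = invmx Sv ->
  let O := obsv K A C in
  let Wo := O^T *m O in
  let M := O *m invmx Wo *m O^T in
  let N := Svih *m invmx Wo *m O^T in
  (exists X : 'M[R]_(K * p), eq_star O Sv X) /\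
  (forall X : 'M[R]_(K * p),
      eq_star O Sv X <-> exists Rm : 'M[R]_(K * p), X = N^T *m N + Rm - M *m Rm *m M) /\
  (exists X : 'M[R]_(K * p), eq_star O Sv X /\ posdef X) /\
  ((p * K)%N = n ->
    forall X : 'M[R]_(K * p), (eq_star O Sv X /\ posdef X) <-> X = N^T *m N).
Proof.
move=> rankO Sv_pd S_pd SS O Wo M N.
have ST : Svih^T = Svih by case: S_pd.
have S_unit := posdef_unitmx S_pd.
have -> : M = colproj O by rewrite /colproj /lpinvmx mulmxA.
have -> : N = Svih *m lpinvmx O by rewrite /lpinvmx mulmxA.
clear M N Wo; set M := colproj O; set N := Svih *m lpinvmx O.
have solP X : eq_star O Sv X <->
    exists Rm, X = N^T *m N + Rm - M *m Rm *m M.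
  by rewrite eq_starE ?posdef_unitmx // -SS; apply: weighted_gram_solutionsP.
pose X0 := N^T *m N + (1%:M - M).
have X0_pd : posdef X0 by apply: posdef_weighted_gram_add_compl.
have X0_sol : eq_star O Sv X0.
  by apply/solP; exists 1%:M; rewrite /X0 mulmx1 colproj_idem // addrA.
split; first by exists X0.
split; first exact: solP.
split; first by exists X0.
move=> pKn X; have M1 : M = 1%:M by apply: (colproj_full rankO); rewrite mulnC.
split=> [[/solP[Rm ->] _] | ->]; first by rewrite M1 mul1mx mulmx1 addrK.
split; first by apply/solP; exists 0; rewrite mulmx0 mul0mx subr0 addr0.
by move: X0_pd; rewrite /X0 M1 subrr addr0.
Qed.
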